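(* Let $\mathcal{B}=\langle V,F,E\rangle$ be a finite bipartite graph and let $W\subseteq V$ be such that the subgraph of $\mathcal{B}$ induced by $(V\setminus W)\cup F$ is self-contained. Then Algorithm 1 (causal ordering via minimal self-contained sets) applied to $(W,\mathcal{B})$ is well-defined, i.e. every run of it can be carried out to completion (at every iteration of the loop the current graph possesses a minimal self-contained set), and its output directed cluster graph is unique, i.e. it does not depend on which minimal self-contained sets are chosen during the run.
   Context: A bipartite graph $\mathcal{B}=\langle V,F,E\rangle$ has disjoint vertex sets $V$ (variable vertices) and $F$ (constraint vertices) and undirected edges $(v-f)$ with $v\in V$, $f\in F$. For $X\subseteq V\cup F$, $\mathrm{adj}_{\mathcal{B}}(X)$ is the set of vertices adjacent in $\mathcal{B}$ to some vertex of $X$. A set $F'\subseteq F$ is self-contained (in $\mathcal{B}$) if $|F'|=|\mathrm{adj}_{\mathcal{B}}(F')|$ and $|F''|\le|\mathrm{adj}_{\mathcal{B}}(F'')|$ for all $F''\subseteq F'$. The graph $\mathcal{B}$ is self-contained if $|F|=|V|$ and $F$ is self-contained. A non-empty self-contained set is minimal self-contained if none of its non-empty strict subsets is self-contained. A directed cluster graph is a pair $\langle\mathcal{V},\mathcal{E}\rangle$ where $\mathcal{V}$ is a partition of a vertex set and $\mathcal{E}$ is a set of directed edges $x\to C$ from vertices $x$ to clusters $C\in\mathcal{V}$. Algorithm 1. Input: $W$ and $\mathcal{B}$ as in the claim. Initialize $\mathcal{E}=\emptyset$, $\mathcal{V}=\{\{w\}:w\in W\}$, and $\mathcal{B}'=\langle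 V',F',E'\rangle$ the subgraph of $\mathcal{B}$ induced by $(V\setminus W)\cup F$. While $\mathcal{B}'$ is not the null graph: choose a minimal self-contained set $S_F\subseteq F'$ of $\mathcal{B}'$; let $C=S_F\cup\mathrm{adj}_{\mathcal{B}'}(S_F)$; add $C$ to $\mathcal{V}$; for every $v\in\mathrm{adj}_{\mathcal{B}}(S_F)\setminus\mathrm{adj}_{\mathcal{B}'}(S_F)$ add the edge $v\to C$ to $\mathcal{E}$; replace $\mathcal{B}'$ by its subgraph induced by $(V'\cup F')\setminus C$. Output: the directed cluster graph $\langle\mathcal{V},\mathcal{E}\rangle$ (the causal ordering graph). *)

From mathcomp Require Import all_boot.
Set Implicit Arguments. Unset Strict Implicit. Unset Printing Implicit Defensive.

(* A finite bipartite graph B = <V, F, E>: variable vertices V, constraint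
   vertices F, and an edge relation E v f meaning (v - f) is an edge.
   A subgraph induced by Vs \cup Fs (Vs : {set V}, Fs : {set F}) is
   represented by the pair (Vs, Fs). *)

Section Defs.
Variables (V F : finType) (E : V -> F -> bool).

Definition adjF (Vs : {set V}) (S : {set F}) : {set V} :=
  [set v in Vs | [exists f in S, E v f]].

Definition self_contained (Vs : {set V}) (Fs : {set F}) (S : {set F}) : bool :=
  [&& S \subset Fs, #|S| == #|adjF Vs S| &
      [forall S2 : {set F}, (S2 \subset S) ==> (#|S2| <= #|adjF Vs S2|)]].

Definition graph_self_contained (Vs : {set V}) (Fs : {set F}) : bool :=
  (#|Fs| == #|Vs|) && self_contained Vs Fs Fs.

Definition minimal_self_contained (Vs : {set V}) (Fs : {set F}) (S : {set F}) : bool :=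
  [&& S != set0, self_contained Vs Fs S &
      [forall S2 : {set F}, ((S2 != set0) && (S2 \proper S)) ==> ~~ self_contained Vs Fs S2]].

(* Directed cluster graphs on the vertex set V + F: a set of clusters and a
   set of edges x -> C. *)
Definition cluster := {set (V + F)}.

(* State of a run of Algorithm 1: the current graph B' (given by its vertex
   sets), and the partial output (clusters, edges). *)
Record state := State {
  st_V : {set V};
  st_F : {set F};
  st_clusters : {set cluster};
  st_edges : {set ((V + F) * cluster)} }.

Definition initial_state (W : {set V}) : state :=
  State (~: W) setT [set [set inl w] | w in W] set0.

Definition new_cluster (st : state) (S : {set F}) : cluster :=
  (inr @: S) :|: (inl @: adjF (st_V st) S).

Definition step (st st' : state) : Prop :=
  exists S : {set F},
    minimal_self_contained (st_V st) (st_F st) S /\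
    let C := new_cluster st S in
    st' = State (st_V st :\: adjF (st_V st) S) (st_F st :\: S)
                (C |: st_clusters st)
                (st_edges st :|:
                   [set (inl v, C) | v in adjF setT S :\: adjF (st_V st) S]).

Inductive reachable (W : {set V}) : state -> Prop :=
| reach_init : reachable W (initial_state W)
| reach_step st st' : reachable W st -> step st st' -> reachable W st'.

(* The current graph is the null graph: the loop terminates. *)
Definition null_state (st : state) : Prop := st_V st = set0 /\ st_F st = set0.

End Defs.

From mathcomp Require Import all_boot zify.
From Stdlib Require Import Relation_Operators Operators_Properties.

(* In a self-contained graph every set S of constraints satisfies
   |S| <= |adj S|, and S |-> |adj S| - |S| is submodular.  Hence two distinct
   minimal self-contained sets S1, S2 are disjoint and so are their
   neighbourhoods: otherwise S1 :&: S2 would be a smaller self-contained set.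
   Removing S1 therefore leaves S2 minimal self-contained, and the two
   removals commute, so one step of Algorithm 1 has the diamond property.
   Removing a self-contained set keeps the remaining graph self-contained,
   so a non-null current graph always has a minimal self-contained set; as
   every step shrinks F, induction on |F| makes the final state unique. *)

Set Implicit Arguments.
Unset Strict Implicit.
Unset Printing Implicit Defensive.

#[local] Arguments clos_refl_trans {A} R _ _.
#[local] Arguments rt_step {A R x y}.
#[local] Arguments rt_trans {A R x y z}.

Section UniqueFinalState.
Variables (T : Type) (R : T -> T -> Prop) (P final : T -> Prop) (measure : T -> nat).
Hypothesis R_invariant : forall x y, P x -> R x y -> P y.
Hypothesis R_decreasing : forall x y, R x y -> measure y < measure x.
Hypothesis final_stuck : forall x y, final x -> ~ R x y.
Hypothesis R_progress : forall x, P x -> final x \/ exists y, R x y.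
Hypothesis R_diamond : forall x y z, P x -> R x y -> R x z ->
  y = z \/ exists2 w, R y w & R z w.

Lemma clos_rt_invariant x y : P x -> clos_refl_trans R x y -> P y.
Proof.
move=> Px /clos_rt_rt1n_iff rxy; elim: rxy Px => // x' y' z' Rxy _ IH Px.
exact/IH/(R_invariant Px Rxy).
Qed.

Lemma exists_final x : P x -> exists2 y, clos_refl_trans R x y & final y.
Proof.
have [n] := ubnP (measure x); elim: n x => // n IH x lt_x Px.
have [fx | [y Rxy]] := R_progress Px; first by exists x; first exact: rt_refl.
have [z yz fz] := IH y (leq_trans (R_decreasing Rxy) lt_x) (R_invariant Px Rxy).
by exists z => //; apply: rt_trans (rt_step Rxy) yz.
Qed.

Lemma final_unique x a b : P x -> clos_refl_trans R x a -> clos_refl_trans R x b ->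
  final a -> final b -> a = b.
Proof.
have [n] := ubnP (measure x); elim: n x a b => // n IH x a b lt_x Px.
move=> /clos_rt_rt1n_iff[|y {}a Rxy ya] /clos_rt_rt1n_iff[|z {}b Rxz zb] fa fb //.
- by case: (final_stuck fa Rxz).
- by case: (final_stuck fb Rxy).
have lt_y := leq_trans (R_decreasing Rxy) lt_x.
have lt_z := leq_trans (R_decreasing Rxz) lt_x.
have [Py Pz] := (R_invariant Px Rxy, R_invariant Px Rxz).
have [eq_yz | [w Ryw Rzw]] := R_diamond Px Rxy Rxz.
  by subst z; apply: (IH y) fa fb => //; apply/clos_rt_rt1n_iff.
have [c wc fc] := exists_final (R_invariant Py Ryw).
have -> : a = c.
  by apply: (IH y) fa fc => //; [apply/clos_rt_rt1n_iff | apply: rt_trans (rt_step Ryw) wc].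
suff -> : b = c by [].
by apply: (IH z) fb fc => //; [apply/clos_rt_rt1n_iff | apply: rt_trans (rt_step Rzw) wc].
Qed.

End UniqueFinalState.

Section CausalOrdering.
Variables (V F : finType) (E : V -> F -> bool).

Local Notation adj := (adjF E).
Local Notation sc := (self_contained E).
Local Notation msc := (minimal_self_contained E).
Local Notation gsc := (graph_self_contained E).

Lemma adjF_sub (Vs : {set V}) (S : {set F}) : adj Vs S \subset Vs.
Proof. by apply/subsetP => v; rewrite inE => /andP[]. Qed.

Lemma adjFS (Vs : {set V}) (S T : {set F}) : S \subset T -> adj Vs S \subset adj Vs T.
Proof.
move=> sST; apply/subsetP => v; rewrite !inE => /andP[-> /existsP[f /andP[fS Evf]]].
by apply/existsP; exists f; rewrite (subsetP sST).
Qed.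

Lemma adjF0 (Vs : {set V}) : adj Vs set0 = set0.
Proof. by apply/setP => v; rewrite !inE; apply/andP => -[_ /existsP[f]]; rewrite inE. Qed.

Lemma adjFU (Vs : {set V}) (S T : {set F}) : adj Vs (S :|: T) = adj Vs S :|: adj Vs T.
Proof.
apply/eqP; rewrite eqEsubset subUset.
rewrite (adjFS Vs (subsetUl S T)) (adjFS Vs (subsetUr S T)) !andbT.
apply/subsetP => v; rewrite !inE => /andP[-> /existsP[f /andP[]]].
by rewrite inE => /orP[] fST Evf; apply/orP; [left | right]; apply/existsP; exists f; rewrite fST.
Qed.

Lemma adjF_setD (Vs X : {set V}) (S : {set F}) : adj (Vs :\: X) S = adj Vs S :\: X.
Proof. by apply/setP => v; rewrite !inE andbA. Qed.

Lemma graph_self_containedP (Vs : {set V}) (Fs : {set F}) :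
  reflect (#|Fs| = #|Vs| /\ forall T : {set F}, T \subset Fs -> #|T| <= #|adj Vs T|)
          (gsc Vs Fs).
Proof.
apply: (iffP andP) => [[/eqP eqFV /and3P[_ _ /forallP hall]] | [eqFV hall]].
  by split=> // T; apply/implyP.
rewrite {1}eqFV eqxx /self_contained subxx eqn_leq hall // eqFV.
rewrite subset_leq_card ?adjF_sub //=.
by split=> //; apply/forallP => T; apply/implyP/hall.
Qed.

Lemma exists_minimal_self_contained (Vs : {set V}) (Fs S : {set F}) :
  S != set0 -> sc Vs Fs S -> exists S', msc Vs Fs S'.
Proof.
move=> S_neq0 scS.
have [|T /andP[T_neq0 scT] minT] :=
  @arg_minnP _ S (fun T => (T != set0) && sc Vs Fs T) (fun T => #|T|).
  by rewrite S_neq0.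
exists T; rewrite /minimal_self_contained T_neq0 scT /=.
apply/forallP => T'; apply/implyP => /andP[T'_neq0 ltT'T]; apply/negP => scT'.
by have := minT T'; rewrite T'_neq0 scT' leqNgt (proper_card ltT'T) => /(_ isT).
Qed.

Section SelfContainedGraph.
Variables (Vs : {set V}) (Fs : {set F}).
Hypothesis gscVF : gsc Vs Fs.

Lemma self_containedI (S1 S2 : {set F}) : sc Vs Fs S1 -> sc Vs Fs S2 ->
  sc Vs Fs (S1 :&: S2) /\ adj Vs S1 :&: adj Vs S2 = adj Vs (S1 :&: S2).
Proof.
have /graph_self_containedP[_ hall] := gscVF.
move=> /and3P[S1F /eqP c1 _] /and3P[S2F /eqP c2 _].
have IF : S1 :&: S2 \subset Fs by rewrite subIset ?S1F.
have UF : S1 :|: S2 \subset Fs by rewrite subUset S1F.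
have le_cup := hall _ UF; rewrite adjFU in le_cup.
have le_cap := hall _ IF.
have sub_cap : adj Vs (S1 :&: S2) \subset adj Vs S1 :&: adj Vs S2.
  by rewrite subsetI !adjFS ?subsetIl ?subsetIr.
have := cardsUI S1 S2; have := cardsUI (adj Vs S1) (adj Vs S2).
have := subset_leq_card sub_cap => *.
have eq_cap : #|S1 :&: S2| = #|adj Vs (S1 :&: S2)| by lia.
split; last by apply/esym/eqP; rewrite eqEcard sub_cap; lia.
rewrite /self_contained IF eq_cap eqxx /=.
by apply/forallP => T; apply/implyP => TI; apply/hall/(subset_trans TI).
Qed.

Lemma minimal_self_contained_disjoint (S1 S2 : {set F}) :
  msc Vs Fs S1 -> msc Vs Fs S2 -> S1 != S2 ->
  S1 :&: S2 = set0 /\ adj Vs S1 :&: adj Vs S2 = set0.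
Proof.
move=> /and3P[_ sc1 /forallP min1] /and3P[_ sc2 /forallP min2] S1_neq_S2.
have [scI eq_adj] := self_containedI sc1 sc2.
suff I0 : S1 :&: S2 = set0 by rewrite eq_adj I0 adjF0.
apply/eqP; apply: contraNT S1_neq_S2 => I_neq0.
have eq1 : S1 :&: S2 = S1.
  apply/eqP; have := min1 (S1 :&: S2).
  by rewrite I_neq0 scI properEneq subsetIl andbT implybF negbK.
have eq2 : S1 :&: S2 = S2.
  apply/eqP; have := min2 (S1 :&: S2).
  by rewrite I_neq0 scI properEneq subsetIr andbT implybF negbK.
by rewrite -[S1]eq1 eq2.
Qed.

End SelfContainedGraph.

Lemma graph_self_contained_setD (Vs : {set V}) (Fs S : {set F}) :
  gsc Vs Fs -> sc Vs Fs S -> gsc (Vs :\: adj Vs S) (Fs :\: S).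
Proof.
move=> /graph_self_containedP[eqFV hall] /and3P[SF /eqP cS _].
apply/graph_self_containedP; split; first by rewrite !cardsDS ?adjF_sub // eqFV cS.
move=> T; rewrite subsetD => /andP[TF disjTS].
have UF : T :|: S \subset Fs by rewrite subUset TF.
have TS0 : T :&: S = set0 by apply/eqP; rewrite setI_eq0.
have := hall _ UF; rewrite adjFU adjF_setD.
have := cardsUI T S; have := cardsUI (adj Vs T) (adj Vs S).
have := cardsD (adj Vs T) (adj Vs S); rewrite TS0 cards0; lia.
Qed.

Section Removal.
Variables (Vs : {set V}) (Fs S1 S2 : {set F}).
Hypotheses (disjS : S1 :&: S2 = set0) (disj_adj : adj Vs S1 :&: adj Vs S2 = set0).

Lemma adjF_setD_disjoint (T : {set F}) : T \subset S2 -> adj (Vs :\: adj Vs S1) T = adj Vs T.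
Proof.
move=> TS2; rewrite adjF_setD; apply/setDidPl.
by rewrite -setI_eq0 -subset0 -disj_adj setIC setIS ?adjFS.
Qed.

Lemma self_contained_setD (T : {set F}) : S2 \subset Fs -> T \subset S2 ->
  sc (Vs :\: adj Vs S1) (Fs :\: S1) T = sc Vs Fs T.
Proof.
move=> S2F TS2; have TF := subset_trans TS2 S2F.
have TFS1 : T \subset Fs :\: S1.
  by rewrite subsetD TF -setI_eq0 -subset0 -disjS setIC setIS.
rewrite /self_contained adjF_setD_disjoint // TFS1 TF; congr [&& _, _ & _].
apply: eq_forallb => T'; case: (boolP (T' \subset T)) => //= T'T.
by rewrite adjF_setD_disjoint // (subset_trans T'T TS2).
Qed.

Lemma minimal_self_contained_setD : S2 \subset Fs ->
  msc (Vs :\: adj Vs S1) (Fs :\: S1) S2 = msc Vs Fs S2.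
Proof.
move=> S2F; rewrite /minimal_self_contained self_contained_setD //; congr [&& _, _ & _].
apply: eq_forallb => T; case: (boolP (T \proper S2)) => [ltTS2 | _]; last by rewrite !andbF.
by rewrite self_contained_setD // proper_sub.
Qed.

End Removal.

Definition next_state (st : state V F) (S : {set F}) : state V F :=
  let C := new_cluster E st S in
  State (st_V st :\: adj (st_V st) S) (st_F st :\: S) (C |: st_clusters st)
        (st_edges st :|: [set (inl v, C) | v in adj setT S :\: adj (st_V st) S]).

Lemma stepP (st st' : state V F) :
  step E st st' <-> exists2 S, msc (st_V st) (st_F st) S & st' = next_state st S.
Proof. by split=> [[S [mS ->]] | [S mS ->]]; exists S. Qed.

Lemma next_stateC (st : state V F) (S1 S2 : {set F}) :
  adj (st_V st) S1 :&: adj (st_V st) S2 = set0 ->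
  next_state (next_state st S1) S2 = next_state (next_state st S2) S1.
Proof.
move=> disj_adj; have disj_adj' : adj (st_V st) S2 :&: adj (st_V st) S1 = set0.
  by rewrite setIC.
rewrite /next_state /new_cluster /= (adjF_setD_disjoint disj_adj (subxx _)).
rewrite (adjF_setD_disjoint disj_adj' (subxx _)).
by rewrite !setDDl setUC [S2 :|: _]setUC setUCA setUAC.
Qed.

Lemma step_self_contained (st st' : state V F) :
  gsc (st_V st) (st_F st) -> step E st st' -> gsc (st_V st') (st_F st').
Proof. by move=> gst /stepP[S /and3P[_ scS _] ->]; apply: graph_self_contained_setD. Qed.

Lemma step_card (st st' : state V F) : step E st st' -> #|st_F st'| < #|st_F st|.
Proof.
move=> /stepP[S /and3P[S_neq0 /and3P[SF _ _] _] ->] /=.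
rewrite -card_gt0 in S_neq0; rewrite cardsDS //; have := subset_leq_card SF; lia.
Qed.

Lemma null_state_stuck (st st' : state V F) : null_state st -> ~ step E st st'.
Proof.
move=> [_ F0] /stepP[S /and3P[S_neq0 /and3P[SF _ _] _] _].
by move: SF; rewrite F0 subset0 (negbTE S_neq0).
Qed.

Lemma step_progress (st : state V F) :
  gsc (st_V st) (st_F st) -> null_state st \/ exists st', step E st st'.
Proof.
move=> gst; have [F0 | F_neq0] := eqVneq (st_F st) set0.
  left; split=> //; have /graph_self_containedP[eqFV _] := gst.
  by apply/eqP; rewrite -cards_eq0 -eqFV F0 cards0.
right; have /andP[_ scF] := gst.
have [S mS] := exists_minimal_self_contained F_neq0 scF.
by exists (next_state st S); apply/stepP; exists S.
Qed.

Lemma step_diamond (st st1 st2 : state V F) : gsc (st_V st) (st_F st) ->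
  step E st st1 -> step E st st2 -> st1 = st2 \/ exists2 st3, step E st1 st3 & step E st2 st3.
Proof.
move=> gst /stepP[S1 m1 ->] /stepP[S2 m2 ->].
have [-> | S1_neq_S2] := eqVneq S1 S2; [by left | right].
have [disjS disj_adj] := minimal_self_contained_disjoint gst m1 m2 S1_neq_S2.
have S1F : S1 \subset st_F st by case/and3P: m1 => _ /and3P[].
have S2F : S2 \subset st_F st by case/and3P: m2 => _ /and3P[].
exists (next_state (next_state st S1) S2).
  by apply/stepP; exists S2; rewrite ?minimal_self_contained_setD.
rewrite next_stateC //; apply/stepP; exists S1 => //.
by rewrite minimal_self_contained_setD // setIC.
Qed.

Let sc_state (st : state V F) := gsc (st_V st) (st_F st).

Lemma steps_self_contained (st st' : state V F) : gsc (st_V st) (st_F st) ->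
  clos_refl_trans (step E) st st' -> gsc (st_V st') (st_F st').
Proof. exact: (clos_rt_invariant (P := sc_state) step_self_contained). Qed.

Lemma run_completes (st : state V F) : gsc (st_V st) (st_F st) ->
  exists2 st', clos_refl_trans (step E) st st' & null_state st'.
Proof. exact: (exists_final (P := sc_state) step_self_contained step_card step_progress). Qed.

Lemma run_output_unique (st st1 st2 : state V F) : gsc (st_V st) (st_F st) ->
  clos_refl_trans (step E) st st1 -> clos_refl_trans (step E) st st2 ->
  null_state st1 -> null_state st2 -> st1 = st2.
Proof.
exact: (final_unique (P := sc_state) step_self_contained step_card null_state_stuck
  step_progress step_diamond).
Qed.

Lemma reachableP (W : {set V}) (st : state V F) :
  reachable E W st <-> clos_refl_trans (step E) (initial_state F W) st.
Proof.
split.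
  by elim=> [|st1 st2 _ IH s12]; [exact: rt_refl | exact: rt_trans IH (rt_step s12)].
move=> /clos_rt_rtn1_iff; elim=> [|st1 st2 s12 _ IH]; first exact: reach_init.
exact: reach_step IH s12.
Qed.

End CausalOrdering.

Theorem theorem4 (V F : finType) (E : V -> F -> bool) (W : {set V})
  (Hsc : graph_self_contained E (~: W) [set: F]) :
  (* well-defined: at every iteration the current graph has a minimal
     self-contained set *)
  (forall st : state V F, reachable E W st -> ~ null_state st ->
     exists S : {set F}, minimal_self_contained E (st_V st) (st_F st) S) /\
  (* some run reaches completion *)
  (exists st : state V F, reachable E W st /\ null_state st) /\
  (* uniqueness of the output *)
  (forall st1 st2 : state V F, reachable E W st1 -> reachable E W st2 ->
     null_state st1 -> null_state st2 ->
     st_clusters st1 = st_clusters st2 /\ st_edges st1 = st_edges st2).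
Proof.
have sc_reachable st : reachable E W st -> graph_self_contained E (st_V st) (st_F st).
  by move=> /reachableP; apply: steps_self_contained.
split; [|split].
- move=> st /sc_reachable/step_progress[// | [st' /stepP[S mS _]]] _.
  by exists S.
- have [st /reachableP reach_st null_st] := run_completes (st := initial_state F W) Hsc.
  by exists st.
- move=> st1 st2 /reachableP r1 /reachableP r2 n1 n2.
  by rewrite (run_output_unique _ r1 r2 n1 n2).
Qed.
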